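(* Let $\epsilon>0$, $M\ge1$, and let $h^{\mathrm{Dir}}$ be the solution of the Dirichlet problem on ${\mathbb T}^{(M)}$ with the boundary condition $u$ below. Then for every $0\le n\le M$ and all distinct $z,y\in\{0,1\}^n$, $$|h^{\mathrm{Dir}}(z)-h^{\mathrm{Dir}}(y)|\ge\epsilon .$$
   Context: Binary tree: for $n\ge0$, $\{0,1\}^n$ is the set of vertices of generation $n$ (words $z=z_1\cdots z_n$; generation $0$ is the root $\emptyset$). For a vertex $z$ of generation $n$, its children are $z0,z1$, and for $0\le m\le n$, $z^{(m)}=z_1\cdots z_m$ is its ancestor in generation $m$. ${\mathbb T}^{(M)}$ is the tree of generations $0,\dots,M$. Dirichlet problem: given $M\ge1$ and $u:\{0,1\}^M\to\mathbb R$, its solution is the unique $h$ on the vertices of ${\mathbb T}^{(M)}$ with $h(\emptyset)=0$, $h(z)=u(z)$ for $z\in\{0,1\}^M$, and $h(z0)+h(z1)+h(z^{(n-1)})=3h(z)$ for all $z\in\{0,1\}^n$, $1\le n<M$. Boundary condition: $u(z)=\epsilon\sum_{\ell=2}^M2^{M-\ell}z_\ell+\tfrac12\epsilon$ if $z_1=1$, and $u(z)=-\epsilon\sum_{\ell=2}^M2^{M-\ell}z_\ell-\tfrac12\epsilon$ if $z_1=0$. *)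

From mathcomp Require Import all_boot all_order all_algebra.
From mathcomp Require Import reals.
Set Implicit Arguments. Unset Strict Implicit. Unset Printing Implicit Defensive.
Import Order.TTheory GRing.Theory Num.Theory.
Local Open Scope ring_scope.

(* Vertices of the binary tree are words z = z_1 ... z_n, represented as
   z : seq bool with size z = n; z_k is  nth false z (k-1).
   Children of z: rcons z false (z0), rcons z true (z1).
   Ancestor z^(m) = take m z. *)

Definition bdry (R : realType) (eps : R) (M : nat) (z : seq bool) : R :=
  let s : nat := (\sum_(2 <= l < M.+1) 2 ^ (M - l) * nth false z (l.-1))%N in
  if nth false z 0 then eps * s%:R + eps / 2 else - (eps * s%:R) - eps / 2.

Definition dirichlet_sol (R : realType) (M : nat) (u : seq bool -> R)
    (h : seq bool -> R) : Prop :=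
  [/\ h [::] = 0,
      (forall z : seq bool, size z = M -> h z = u z) &
      (forall z : seq bool, (1 <= size z)%N -> (size z < M)%N ->
         h (rcons z false) + h (rcons z true) + h (take (size z).-1 z)
         = 3 * h z)].

From mathcomp Require Import all_boot all_order all_algebra.
From mathcomp Require Import reals ring lra zify.
Set Implicit Arguments. Unset Strict Implicit. Unset Printing Implicit Defensive.
Import Order.TTheory GRing.Theory Num.Theory.
Local Open Scope ring_scope.

(* Number the words of generation n by r(z) in {0, ..., 2^n - 1}, putting the
   words starting with 0 in reverse binary order before those starting with 1 in
   binary order, so that the parent of z has rank r(z)/2 and the boundary datum
   is u(z) = eps (r(z) - 2^(M-1) + 1/2).  For z of generation n and c = 2^(M-n),
   (2c - 1) h(z) = (c - 1) h(z^-) + eps c^2 (r(z) - 2^(n-1) + 1/2)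
   holds at the boundary and propagates upwards through the mean value equation,
   because r(z0) + r(z1) = 4 r(z) + 1.  For r(z) < r(y) in the same generation
   we get r(z^-) <= r(y^-), and subtracting the two identities,
   (2c - 1) (h(y) - h(z)) >= (c - 1) (h(y^-) - h(z^-)) + eps c^2 >= (2c - 1) eps
   by induction on the generation. *)

Definition binval (w : seq bool) : nat := foldl (fun n (c : bool) => 2 * n + c)%N 0%N w.

Definition level_rank (z : seq bool) : nat :=
  if z is b :: w then if b then (2 ^ size w + binval w)%N else binval (map negb w)
  else 0%N.

Lemma binval_rcons w c : binval (rcons w c) = (2 * binval w + c)%N.
Proof. by rewrite /binval foldl_rcons. Qed.

Lemma binval_negb w : ((binval (map negb w) + binval w).+1 = 2 ^ size w)%N.
Proof.
elim/last_ind: w => [|w c IH] //.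
by rewrite map_rcons !binval_rcons size_rcons expnS -IH; case: c; lia.
Qed.

Lemma sum_digits_binval b w :
  (\sum_(2 <= l < (size w).+2) 2 ^ ((size w).+1 - l) * nth false (b :: w) l.-1)%N
  = binval w.
Proof.
elim/last_ind: w => [|w c IH]; first by rewrite big_geq.
rewrite size_rcons big_nat_recr //= binval_rcons -IH subnn mul1n.
rewrite nth_rcons ltnn eqxx; congr (_ + _)%N.
rewrite big_distrr /=; apply: eq_big_nat => -[|[|l]] // /andP[_ lt_l].
rewrite /= nth_rcons ifT; last by lia.
by rewrite mulnA -expnS -subSn.
Qed.

Lemma level_rank_rcons b w c :
  level_rank (rcons (b :: w) c) = (2 * level_rank (b :: w) + (c == b))%N.
Proof.
rewrite rcons_cons /= size_rcons expnS; case: b.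
  by rewrite binval_rcons; case: c; lia.
by rewrite map_rcons binval_rcons; case: c; lia.
Qed.

Lemma level_rank_parent z c : ((level_rank (rcons z c))./2 = level_rank z)%N.
Proof.
case: z => [|b w]; first by case: c.
by rewrite level_rank_rcons addnC mul2n half_bit_double.
Qed.

Lemma level_rank_inj z y : size z = size y -> level_rank z = level_rank y -> z = y.
Proof.
elim/last_ind: z y => [|z a IH] y; first by case: y.
case/lastP: y => [|y a']; rewrite !size_rcons // => -[eq_size] eq_rank.
have eq_zy : z = y by apply: IH => //; rewrite -(level_rank_parent z a) eq_rank level_rank_parent.
subst y; case: z IH eq_size eq_rank => [|b w] _ _; first by case: a; case: a'.
by rewrite !level_rank_rcons => /addnI; case: a; case: a'; case: b.
Qed.

Definition centered_rank (R : numFieldType) (z : seq bool) : R :=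
  (level_rank z)%:R - 2 ^+ (size z).-1 + 2^-1.

Lemma centered_rank_children (R : numFieldType) z : (1 <= size z)%N ->
  centered_rank R (rcons z false) + centered_rank R (rcons z true) = 4 * centered_rank R z.
Proof.
case: z => [|b w] // _; rewrite /centered_rank !level_rank_rcons !size_rcons /= exprS.
by case: b; rewrite /= !natrD ?natrX; field.
Qed.

Lemma bdry_centered_rank (R : realType) (eps : R) z : (1 <= size z)%N ->
  bdry eps (size z) z = eps * centered_rank R z.
Proof.
case: z => [|b w] // _; rewrite /bdry /centered_rank sum_digits_binval /=.
have /(congr1 (GRing.natmul (1 : R))) := binval_negb w.
rewrite natrX -addn1 !natrD => eq_compl.
by case: b; rewrite ?natrD ?natrX; last rewrite -eq_compl; field.
Qed.

Lemma take_rcons_parent (z : seq bool) a : take (size (rcons z a)).-1 (rcons z a) = z.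
Proof. by rewrite size_rcons -cats1 take_size_cat. Qed.

Lemma gap_propagation (R : realFieldType) (c eps dh dr d : R) :
  1 <= c -> 0 < eps -> 0 <= dh -> 1 <= dr ->
  (2 * c - 1) * d = (c - 1) * dh + eps * c ^+ 2 * dr -> eps <= d.
Proof.
move=> c_ge1 eps_gt0 dh_ge0 dr_ge1 eq_d.
have dh_term : 0 <= (c - 1) * dh by rewrite mulr_ge0 // subr_ge0.
have dr_term : eps * c ^+ 2 <= eps * c ^+ 2 * dr.
  by rewrite ler_peMr // mulr_ge0 ?sqr_ge0 // ltW.
have sq_term : 0 <= eps * (c - 1) ^+ 2 by rewrite mulr_ge0 ?sqr_ge0 // ltW.
have : (2 * c - 1) * eps <= (2 * c - 1) * d by rewrite eq_d; nra.
by rewrite ler_pM2l; lra.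
Qed.

Section DirichletSolution.

Variables (R : realType) (eps : R) (M : nat) (h : seq bool -> R).
Hypothesis h_sol : dirichlet_sol M (bdry eps M) h.

Lemma dirichlet_sol_rcons j z a : ((size z).+1 + j)%N = M ->
  (2 * 2 ^+ j - 1) * h (rcons z a)
  = (2 ^+ j - 1) * h z + eps * (2 ^+ j) ^+ 2 * centered_rank R (rcons z a).
Proof.
case: h_sol => _ h_bdry h_mean.
elim: j z a => [|j IH] z a size_z.
  rewrite addn0 in size_z.
  by rewrite h_bdry -size_z -(size_rcons z a) // bdry_centered_rank ?size_rcons //; ring.
set w := rcons z a.
have size_w : ((size w).+1 + j)%N = M by rewrite size_rcons; lia.
have w_pos : (0 < size w)%N by rewrite size_rcons.
have := h_mean w w_pos (ltac:(lia) : (size w < M)%N).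
rewrite take_rcons_parent => mean_w.
have children := centered_rank_children R w_pos.
have h0 := IH w false size_w; have h1 := IH w true size_w.
rewrite exprS; set c : R := 2 ^+ j in h0 h1 *.
have : (2 * c - 1) * (3 * h w - h z)
       = 2 * (c - 1) * h w + eps * c ^+ 2 * (4 * centered_rank R w).
  by rewrite -children -mean_w; lra.
lra.
Qed.

Lemma dirichlet_sol_gap n z y : 0 < eps -> (n <= M)%N -> size z = n -> size y = n ->
  (level_rank z < level_rank y)%N -> h z + eps <= h y.
Proof.
move=> eps_gt0; elim: n z y => [|n IH] z y le_nM; first by move=> /size0nil -> /size0nil ->.
case/lastP: z => [|z a]; case/lastP: y => [|y b]; rewrite ?size_rcons // => -[size_z] [size_y].
move=> lt_rank.
have le_parents : h z <= h y.
  have := half_leq (ltnW lt_rank); rewrite !level_rank_parent => le_rank.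
  have [-> //|ne_zy] := eqVneq z y.
  have : (level_rank z < level_rank y)%N.
    rewrite ltn_neqAle le_rank andbT; apply: contra ne_zy => /eqP eq_rank.
    by apply/eqP/level_rank_inj; rewrite ?size_z ?size_y.
  by move/(IH z y (ltnW le_nM) size_z size_y) => gap_zy; lra.
have size_j (w : seq bool) : size w = n -> ((size w).+1 + (M - n.+1))%N = M by move=> ->; lia.
have := dirichlet_sol_rcons a (size_j z size_z).
have := dirichlet_sol_rcons b (size_j y size_y).
set c : R := 2 ^+ (M - n.+1) => eq_y eq_z.
rewrite -lerBrDl; apply: (@gap_propagation _ c eps (h y - h z)
  (centered_rank R (rcons y b) - centered_rank R (rcons z a))).
- by rewrite /c exprn_ege1 //; lra.
- exact: eps_gt0.
- lra.
- rewrite /centered_rank !size_rcons size_y size_z.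
  move: lt_rank; rewrite -(ler_nat R) -natr1 => lt_rank; lra.
- by rewrite mulrBr eq_y eq_z; ring.
Qed.

End DirichletSolution.

Theorem lemma2p4 (R : realType) (eps : R) (M : nat) (h : seq bool -> R) :
  0 < eps -> (1 <= M)%N ->
  dirichlet_sol M (bdry eps M) h ->
  forall (n : nat) (z y : seq bool),
    (n <= M)%N -> size z = n -> size y = n -> z != y ->
    eps <= `|h z - h y|.
Proof.
move=> eps_gt0 _ h_sol n z y le_nM size_z size_y ne_zy.
have gap (x w : seq bool) : size x = n -> size w = n ->
    (level_rank x < level_rank w)%N -> eps <= `|h x - h w|.
  move=> size_x size_w /(dirichlet_sol_gap h_sol eps_gt0 le_nM size_x size_w) gap_xw.
  by rewrite distrC ler_normr; apply/orP; left; lra.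
have : level_rank z != level_rank y.
  apply: contra ne_zy => /eqP eq_rank.
  by apply/eqP/level_rank_inj; rewrite ?size_z ?size_y.
rewrite neq_ltn => /orP[lt_zy|lt_yz]; first exact: gap.
by rewrite distrC; apply: gap.
Qed.
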